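(* Let $\Omega\subseteq\mathbb{R}^n$ be a bounded open set with Lipschitz boundary and let $f:\mathbb{R}^{N\times n}\to\mathbb{R}$ be a Borel measurable function which is strong Morrey quasiconvex in $\Omega$. Then $f$ is lower semicontinuous.
   Context: For a bounded open set $\Omega\subseteq\mathbb{R}^n$ with Lipschitz boundary, a Borel measurable $f:\mathbb{R}^{N\times n}\to\mathbb{R}$ is strong Morrey quasiconvex in $\Omega$ if: for every $\varepsilon>0$, every $\xi\in\mathbb{R}^{N\times n}$ and every $K>0$ there exists $\delta=\delta(\varepsilon,K,\xi)>0$ such that for every $\varphi\in W^{1,\infty}(\Omega;\mathbb{R}^N)$ (identified with its Lipschitz representative, continuous on $\overline\Omega$) with $\|D\varphi\|_{L^\infty(\Omega)}\le K$ and $\max_{x\in\partial\Omega}|\varphi(x)|\le\delta$ one has $f(\xi)\le\operatorname{ess\,sup}_{x\in\Omega}f(\xi+D\varphi(x))+\varepsilon$. *)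

From HB Require Import structures.
From mathcomp Require Import all_boot all_order all_algebra.
From mathcomp Require Import all_classical all_reals all_analysis.
Set Implicit Arguments. Unset Strict Implicit. Unset Printing Implicit Defensive.
Import Order.TTheory GRing.Theory Num.Theory.
Import numFieldNormedType.Exports.
Local Open Scope classical_set_scope.
Local Open Scope ring_scope.

Definition enorm {R : realType} {N : nat} (v : 'rV[R]_N) : R :=
  Num.sqrt (\sum_(i < N) v 0 i ^+ 2).
Definition fnorm {R : realType} {N n : nat} (A : 'M[R]_(N, n)) : R :=
  Num.sqrt (\sum_(i < N) \sum_(j < n) A i j ^+ 2).

Definition box_vol {R : realType} {n : nat} (a b : 'rV[R]_n) : R :=
  \prod_(i < n) (b 0 i - a 0 i).
Definition in_box {R : realType} {n : nat} (a b : 'rV[R]_n) (x : 'rV[R]_n) : Prop :=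
  forall i : 'I_n, a 0 i <= x 0 i <= b 0 i.

Definition lebesgue_null {R : realType} {n : nat} (A : set 'rV[R]_n) : Prop :=
  forall eps : R, 0 < eps ->
  exists a b : nat -> 'rV[R]_n,
    (forall k (i : 'I_n), a k 0 i <= b k 0 i) /\
    (forall x, A x -> exists k, in_box (a k) (b k) x) /\
    (forall m, \sum_(k < m) box_vol (a k) (b k) <= eps).

Definition ess_sup_on {R : realType} {n : nat} (Omega : set 'rV[R]_n)
  (g : 'rV[R]_n -> \bar R) : \bar R :=
  ereal_inf [set t : \bar R | lebesgue_null [set x | Omega x /\ (t < g x)%E]].

Definition borel_measurable {T U : topologicalType} (f : T -> U) : Prop :=
  forall B : set U, <<s open >> B -> <<s open >> (f @^-1` B).

Definition bounded_set_rV {R : realType} {n : nat} (Omega : set 'rV[R]_n) : Prop :=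
  exists M : R, forall x, Omega x -> `|x| <= M.

Definition bdry {R : realType} {n : nat} (Omega : set 'rV[R]_n) : set 'rV[R]_n :=
  closure Omega `\` interior Omega.

(* Lipschitz boundary: near each boundary point, after a rigid change of
   coordinates, Omega is the strict supergraph of a Lipschitz function of the
   remaining n-1 coordinates. *)
Definition lipschitz_boundary {R : realType} {n : nat} (Omega : set 'rV[R]_n) : Prop :=
  forall x0, bdry Omega x0 ->
  exists (U : set 'rV[R]_n) (Q : 'M[R]_n) (j : 'I_n) (gam : 'rV[R]_n -> R),
    [/\ open U /\ U x0, Q *m Q^T = 1%:M,
        (exists L : R, forall y z, `|gam y - gam z| <= L * `|y - z|),
        (forall y (t : R), gam (y + t *: delta_mx 0 j) = gam y) &
        (forall x, U x ->
           (Omega x <-> gam ((x - x0) *m Q) < ((x - x0) *m Q) 0 j))].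

(* The gradient D phi (x) in R^{N x n}: (D phi(x))_{ij} = d phi_i / d x_j. *)
Definition grad {R : realType} {n N : nat} (phi : 'rV[R]_n -> 'rV[R]_N)
  (x : 'rV[R]_n) : 'M[R]_(N, n) := ('J phi x)^T.

(* phi is (the Lipschitz representative, continuous on the closure, of) an
   element of W^{1,oo}(Omega;R^N) with ||D phi||_{L^oo(Omega)} <= K. *)
Definition W1inf_bounded {R : realType} {n N : nat} (Omega : set 'rV[R]_n)
  (phi : 'rV[R]_n -> 'rV[R]_N) (K : R) : Prop :=
  [/\ {within closure Omega, continuous phi},
      (exists M : R, forall x, Omega x -> enorm (phi x) <= M),
      (forall x, Omega x -> exists2 r : R, 0 < r & exists L : R,
          forall y z, ball x r y -> ball x r z ->
            `|phi y - phi z| <= L * `|y - z|) &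
      lebesgue_null [set x | Omega x /\
          ~ (differentiable phi x /\ fnorm (grad phi x) <= K)]].

Definition strong_morrey_qc {R : realType} {n N : nat} (Omega : set 'rV[R]_n)
  (f : 'M[R]_(N, n) -> R) : Prop :=
  forall (eps : R), 0 < eps -> forall (xi : 'M[R]_(N, n)) (K : R), 0 < K ->
  exists2 delta : R, 0 < delta &
    forall phi : 'rV[R]_n -> 'rV[R]_N,
      W1inf_bounded Omega phi K ->
      (forall x, bdry Omega x -> enorm (phi x) <= delta) ->
      ((f xi)%:E <= ess_sup_on Omega (fun x => (f (xi + grad phi x))%:E) + eps%:E)%E.

(* Testing strong Morrey quasiconvexity at xi with the linear map whose
   gradient is the constant eta - xi gives f xi <= f eta + eps: the essential
   supremum of f (xi + D phi) is just f eta, and on the bounded set Omega the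
   boundary values of phi are small once eta is close to xi.  Hence f is lower
   semicontinuous. *)
From HB Require Import structures.
From mathcomp Require Import all_boot all_order all_algebra.
From mathcomp Require Import all_classical all_reals all_analysis.
From mathcomp Require Import lra.
Set Implicit Arguments. Unset Strict Implicit. Unset Printing Implicit Defensive.
Import Order.TTheory GRing.Theory Num.Theory.
Import numFieldNormedType.Exports.
Local Open Scope classical_set_scope.
Local Open Scope ring_scope.

Section MatrixNorms.
Variable R : realType.

Lemma mx_norm_ge_entry p q (A : 'M[R]_(p, q)) i j : `|A i j| <= `|A|.
Proof.
rewrite [`|A|](mx_normrE A).
exact: (@le_bigmax _ _ _ 0 (fun ij : 'I_p * 'I_q => `|A ij.1 ij.2|) (i, j)).
Qed.

Lemma mx_norm_le p q (A : 'M[R]_(p, q)) (c : R) :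
  0 <= c -> (forall i j, `|A i j| <= c) -> `|A| <= c.
Proof. by move=> c0 Ac; rewrite [`|A|](mx_normrE A); apply/bigmax_leP; split=> // ij _. Qed.

Lemma mx_norm_trmx p q (A : 'M[R]_(p, q)) : `|A^T| = `|A|.
Proof.
apply/le_anti/andP; split; apply: mx_norm_le => // i j.
  by rewrite mxE mx_norm_ge_entry.
by have := mx_norm_ge_entry A^T j i; rewrite mxE.
Qed.

Lemma mx_norm_mulmx_le p q r (A : 'M[R]_(p, q)) (B : 'M[R]_(q, r)) :
  `|A *m B| <= q%:R * (`|A| * `|B|).
Proof.
apply: mx_norm_le => [|i j]; first by rewrite !mulr_ge0.
rewrite mxE; apply: (le_trans (ler_norm_sum _ _ _)).
rewrite -[q in q%:R]card_ord -sumr_const mulr_suml.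
by apply: ler_sum => k _; rewrite mul1r normrM ler_pM ?mx_norm_ge_entry.
Qed.

Lemma sqrt_sum_sqr_le (I : finType) (F : I -> R) (c : R) :
  0 <= c -> (forall i, `|F i| <= c) -> Num.sqrt (\sum_i F i ^+ 2) <= #|I|%:R * c.
Proof.
move=> c0 Fc; have Ic0 : 0 <= #|I|%:R * c by rewrite mulr_ge0.
rewrite -(ger0_norm Ic0) -sqrtr_sqr ler_sqrt ?sqr_ge0 //.
apply: (@le_trans _ _ (\sum_(i : I) c ^+ 2)).
  by apply: ler_sum => i _; rewrite -real_normK ?num_real // lerXn2r ?nnegrE.
rewrite sumr_const (@eq_card _ _ I) // -[_ *+ _]mulr_natl exprMn ler_wpM2r ?sqr_ge0 //.
case: #|I| => [|k]; first by rewrite expr0n.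
by rewrite expr2 ler_peMl // ler1n.
Qed.

Lemma enorm_le_mx_norm N (v : 'rV[R]_N) : enorm v <= N%:R * `|v|.
Proof.
rewrite /enorm -[N in N%:R]card_ord.
by apply: sqrt_sum_sqr_le => // i; apply: mx_norm_ge_entry.
Qed.

Lemma fnorm_le_mx_norm N n (A : 'M[R]_(N, n)) : fnorm A <= (N * n)%:R * `|A|.
Proof.
rewrite /fnorm pair_big /=.
have -> : (N * n)%N = #|{: 'I_N * 'I_n}| by rewrite card_prod !card_ord.
by apply: sqrt_sum_sqr_le => // -[i j]; apply: mx_norm_ge_entry.
Qed.

Lemma enorm_mulmx_le n N (x : 'rV[R]_n) (B : 'M[R]_(n, N)) :
  enorm (x *m B) <= (N * n)%:R * (`|x| * `|B|).
Proof.
rewrite natrM -mulrA; apply: (le_trans (enorm_le_mx_norm _)).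
by rewrite ler_wpM2l ?mx_norm_mulmx_le.
Qed.

End MatrixNorms.

Section LinearMaps.
Variables (R : realType) (n N : nat) (B : 'M[R]_(n, N)).

Lemma mulmxr_continuous : continuous (mulmxr B : 'rV[R]_n -> 'rV[R]_N).
Proof.
apply: bounded_linear_continuous; apply/linear_boundedP.
near=> r; have Br : n%:R * `|B| <= r.
  by near: r; apply: nbhs_pinfty_ge; rewrite num_real.
move=> x /=; apply: (le_trans (mx_norm_mulmx_le _ _)).
by rewrite mulrCA mulrC ler_wpM2r.
Unshelve. all: by end_near.
Qed.

Lemma grad_mulmxr x :
  differentiable (mulmxr B) x /\ grad (mulmxr B) x = B^T.
Proof.
split; first exact: linear_differentiable mulmxr_continuous.
rewrite /grad /jacobian (diff_lin _ mulmxr_continuous); congr (_ ^T).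
by apply/row_matrixP => i; rewrite !rowE mul_rV_lin1.
Qed.

End LinearMaps.

Section NullSets.
Variables (R : realType) (n : nat).

Lemma lebesgue_nullS (A B : set 'rV[R]_n) : A `<=` B -> lebesgue_null B -> lebesgue_null A.
Proof.
move=> AB nullB eps eps0; have [a [b [ab [Bab vol]]]] := nullB eps eps0.
by exists a, b; split=> //; split=> // x /AB; apply: Bab.
Qed.

(* A box in dimension 0 has volume 1 (empty product), so [set0] is not null there. *)
Lemma lebesgue_null0 : (0 < n)%N -> lebesgue_null (@set0 'rV[R]_n).
Proof.
move=> n0 eps eps0; exists (fun=> 0), (fun=> 0); split=> //; split=> // m.
rewrite big1 ?ltW // => k _; rewrite /box_vol (eq_bigr (fun=> 0)).
  by rewrite prodr_const card_ord expr0n gtn_eqF.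
by move=> i _; rewrite !mxE subrr.
Qed.

Lemma ess_sup_on_le (Omega : set 'rV[R]_n) (g : 'rV[R]_n -> \bar R) (c : \bar R) :
  (0 < n)%N -> (forall x, Omega x -> (g x <= c)%E) -> (ess_sup_on Omega g <= c)%E.
Proof.
move=> n0 gc; apply: ereal_inf_lbound.
apply: lebesgue_nullS (lebesgue_null0 n0) => x [/gc gxc].
by rewrite ltNge gxc.
Qed.

End NullSets.

Lemma bdry_norm_le (R : realType) n (Omega : set 'rV[R]_n) (M : R) :
  (forall x, Omega x -> `|x| <= M) -> forall x, bdry Omega x -> `|x| <= M.
Proof.
move=> OM x [clx _].
have closedM : closed [set y : 'rV[R]_n | `|y| <= M].
  have := @preimage_closed _ _ (@Num.norm _ 'rV[R]_n) [set r : R | r <= M].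
  by apply=> // y _; apply: norm_continuous.
by have := closureS OM clx; rewrite -(closure_id _).1.
Qed.

Lemma W1inf_bounded_mulmxr (R : realType) n N (Omega : set 'rV[R]_n)
    (B : 'M[R]_(n, N)) (K : R) :
  (0 < n)%N -> bounded_set_rV Omega -> fnorm B^T <= K ->
  W1inf_bounded Omega (mulmxr B) K.
Proof.
move=> n0 [M OM] BK; split.
- exact/continuous_subspaceT/mulmxr_continuous.
- exists ((N * n)%:R * (M * `|B|)) => x /OM xM.
  by apply: le_trans (enorm_mulmx_le x B) _; rewrite ler_wpM2l // ler_wpM2r.
- move=> x _; exists 1 => //; exists (n%:R * `|B|) => y z _ _ /=.
  by rewrite -mulmxBl; apply: le_trans (mx_norm_mulmx_le _ _) _; rewrite mulrCA mulrC.
- apply: lebesgue_nullS (lebesgue_null0 (R:=R) n0) => x [_ []].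
  by have [? ->] := grad_mulmxr B x.
Qed.

Section LinearTestFunctions.
Variables (R : realType) (n N : nat) (Omega : set 'rV[R]_n).
Hypotheses (n_gt0 : (0 < n)%N) (Omega_bounded : bounded_set_rV Omega).

Lemma mulmxr_small_test_function (delta : R) : 0 < delta ->
  exists2 r : R, 0 < r & forall A : 'M[R]_(N, n), `|A| < r ->
    W1inf_bounded Omega (mulmxr A^T) 1 /\
    forall x, bdry Omega x -> enorm (mulmxr A^T x) <= delta.
Proof.
move=> delta0; have [M OM] := Omega_bounded.
set c : R := (N * n)%:R; set D := c * (`|M| + 1) + 1.
have D0 : 0 < D by rewrite ltr_wpDl ?mulr_ge0.
exists (Num.min delta 1 / D); first by rewrite divr_gt0 // lt_min delta0 ltr01.
move=> A small; have DA : D * `|A| < Num.min delta 1 by rewrite mulrC -ltr_pdivlMr.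
have /andP[A_delta A_1] :
    (c * ((`|M| + 1) * `|A|) <= delta) && (c * ((`|M| + 1) * `|A|) <= 1).
  by rewrite -le_min mulrA (le_trans _ (ltW DA)) // ler_wpM2r // lerDl.
split=> [|x /(bdry_norm_le OM) xM].
  apply: W1inf_bounded_mulmxr => //; rewrite trmxK.
  apply: le_trans (fnorm_le_mx_norm A) (le_trans _ A_1).
  by rewrite ler_wpM2l // ler_peMl // lerDr.
apply: le_trans (enorm_mulmx_le x A^T) (le_trans _ A_delta).
rewrite mx_norm_trmx ler_wpM2l // ler_wpM2r //.
by rewrite (le_trans xM) // (le_trans (ler_norm M)) // lerDl.
Qed.

Lemma strong_morrey_qc_le_near (f : 'M[R]_(N, n) -> R) (xi : 'M[R]_(N, n)) (eps : R) :
  strong_morrey_qc Omega f -> 0 < eps ->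
  exists2 r : R, 0 < r & forall eta, `|eta - xi| < r -> f xi <= f eta + eps.
Proof.
move=> qc eps0; have [delta delta0 qcxi] := qc eps eps0 xi 1 ltr01.
have [r r0 test] := mulmxr_small_test_function delta0.
exists r => // eta /test[W bd].
have ess : (ess_sup_on Omega (fun x => (f (xi + grad (mulmxr (eta - xi)^T) x))%:E)
            <= (f eta)%:E)%E.
  apply: ess_sup_on_le => // x _.
  by have [_ ->] := grad_mulmxr (eta - xi)^T x; rewrite trmxK addrC subrK.
by rewrite -lee_fin EFinD (le_trans (qcxi _ W bd)) // leeD2r.
Qed.

End LinearTestFunctions.

Theorem mainTheorem2 (R : realType) (n N : nat) (Omega : set 'rV[R]_n)
  (f : 'M[R]_(N, n) -> R) :
  open Omega -> bounded_set_rV Omega -> lipschitz_boundary Omega ->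
  borel_measurable f -> strong_morrey_qc Omega f ->
  lower_semicontinuous (fun xi => (f xi)%:E).
Proof.
move=> _ Obd _ _ qc xi a; rewrite lte_fin => afxi.
have [n0|n0] := posnP n.
  subst n; exists setT => [|eta _]; first exact: filterT.
  by rewrite (thinmx0 eta) -(thinmx0 xi) lte_fin.
set eps := (f xi - a) / 2.
have eps0 : 0 < eps by rewrite divr_gt0 // subr_gt0.
have [r r0 near_xi] := strong_morrey_qc_le_near n0 Obd xi qc eps0.
exists (ball xi r); first exact: nbhsx_ballx.
move=> eta; rewrite -ball_normE /= distrC => /near_xi fxi_le.
have halves : eps + eps = f xi - a by rewrite /eps -splitr.
rewrite lte_fin; lra.
Qed.
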